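(* Let $M$ be a $k\times k$ matrix (for some $k\ge1$) with all entries positive integers such that $M^2=5M$. Then, up to conjugation by a permutation matrix, $M$ is one of the following: $N_1=(5)$, $N_2=\begin{pmatrix}4&1\\4&1\end{pmatrix}$, $N_3=\begin{pmatrix}4&4\\1&1\end{pmatrix}$, $N_4=\begin{pmatrix}4&2\\2&1\end{pmatrix}$, $N_5=\begin{pmatrix}3&6\\1&2\end{pmatrix}$, $N_6=\begin{pmatrix}3&3\\2&2\end{pmatrix}$, $N_7=\begin{pmatrix}3&2\\3&2\end{pmatrix}$, $N_8=\begin{pmatrix}3&1\\6&2\end{pmatrix}$, $N_9=\begin{pmatrix}3&1&1\\3&1&1\\3&1&1\end{pmatrix}$, $N_{10}=\begin{pmatrix}3&3&3\\1&1&1\\1&1&1\end{pmatrix}$, $N_{11}=\begin{pmatrix}2&2&2\\2&2&2\\1&1&1\end{pmatrix}$, $N_{12}=\begin{pmatrix}2&4&2\\1&2&1\\1&2&1\end{pmatrix}$, $N_{13}=\begin{pmatrix}2&2&1\\2&2&1\\2&2&1\end{pmatrix}$, $N_{14}$ = the $5\times5$ all-ones matrix, $N_{15}=\begin{pmatrix}2&1&1&1\\2&1&1&1\\2&1&1&1\\2&1&1&1\end{pmatrix}$, $N_{16}=\begin{pmatrix}2&2&2&2\\1&1&1&1\\1&1&1&1\\1&1&1&1\end{pmatrix}$.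
   Context: Conjugation by a permutation matrix means replacing $M$ by $PMP^{-1}$ for a permutation matrix $P$ (simultaneous permutation of rows and columns). *)

From HB Require Import structures.
From mathcomp Require Import all_boot all_order all_algebra all_fingroup.
Set Implicit Arguments. Unset Strict Implicit. Unset Printing Implicit Defensive.
Import GRing.Theory Num.Theory.
Local Open Scope ring_scope.

Definition N_list : seq (seq (seq int)) :=
  [:: [:: [:: 5]];
      [:: [:: 4; 1]; [:: 4; 1]];
      [:: [:: 4; 4]; [:: 1; 1]];
      [:: [:: 4; 2]; [:: 2; 1]];
      [:: [:: 3; 6]; [:: 1; 2]];
      [:: [:: 3; 3]; [:: 2; 2]];
      [:: [:: 3; 2]; [:: 3; 2]];
      [:: [:: 3; 1]; [:: 6; 2]];
      [:: [:: 3; 1; 1]; [:: 3; 1; 1]; [:: 3; 1; 1]];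
      [:: [:: 3; 3; 3]; [:: 1; 1; 1]; [:: 1; 1; 1]];
      [:: [:: 2; 2; 2]; [:: 2; 2; 2]; [:: 1; 1; 1]];
      [:: [:: 2; 4; 2]; [:: 1; 2; 1]; [:: 1; 2; 1]];
      [:: [:: 2; 2; 1]; [:: 2; 2; 1]; [:: 2; 2; 1]];
      nseq 5 (nseq 5 1);
      nseq 4 [:: 2; 1; 1; 1];
      [:: [:: 2; 2; 2; 2]; [:: 1; 1; 1; 1];
          [:: 1; 1; 1; 1]; [:: 1; 1; 1; 1]]
  ].

Definition mx_is (k : nat) (A : 'M[int]_k) (N : seq (seq int)) : Prop :=
  size N = k /\ forall i j : 'I_k, A i j = nth 0 (nth [::] N i) j.

From HB Require Import structures.
From mathcomp Require Import all_boot all_order all_algebra all_fingroup.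
From mathcomp Require Import zify ring.
Import Order.TTheory GRing.Theory Num.Theory.
Local Open Scope ring_scope.

(* Entrywise positivity and M^2 = 5M force rank one: at a row m minimizing
   M_mj / M_mj', the sum of the nonnegative terms M_ml (M_lj M_mj' - M_mj M_lj')
   is M_mj' (M^2)_mj - M_mj (M^2)_mj' = 0, so any two columns are proportional.
   Hence M_ij M_00 = M_i0 M_0j, and (M^2)_ii = (tr M) M_ii gives tr M = 5.  So
   k <= 5, the diagonal is a composition of 5, and M_i0 <= M_i0 M_0i = M_ii M_00
   <= 6 for i <> 0.  As M is determined by its diagonal and first column, the
   finitely many candidates are classified by computation. *)

Lemma invmx_perm_mx (R : comUnitRingType) n (s : 'S_n) :
  invmx (perm_mx s) = perm_mx s^-1 :> 'M[R]_n.
Proof.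
rewrite -[invmx _]mulmx1 -(perm_mx1 R) -(mulgV s) perm_mxM mulmxA.
by rewrite mulVmx ?unitmx_perm // mul1mx.
Qed.

Lemma perm_mx_conjE (R : comUnitRingType) n (s : 'S_n) (A : 'M[R]_n) i j :
  (perm_mx s *m A *m invmx (perm_mx s)) i j = A (s i) (s j).
Proof. by rewrite invmx_perm_mx -row_permE -col_permE !mxE. Qed.

Lemma exists_min_ratio (I : finType) (i0 : I) (u v : I -> int) :
  (forall i, 0 < v i) -> exists m, forall i, u m * v i <= u i * v m.
Proof.
move=> v_gt0; pose F i : rat := (u i)%:~R / (v i)%:~R.
have [m _ m_min] := @real_arg_minP _ _ i0 predT F isT (fun i _ => num_real _).
exists m => i; have v_gt0' x : 0 < (v x)%:~R :> rat by rewrite ltr0z.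
have := m_min i isT; rewrite /F ler_pdivrMr // mulrAC ler_pdivlMr //.
by rewrite -!intrM ler_int.
Qed.

Section PositiveScaledIdempotent.

Variables (n : nat) (c : int) (M : 'M[int]_n).
Hypotheses (M_gt0 : forall i j, 0 < M i j) (M_sq : M *m M = c *: M).

Lemma mulmx_sq_entry i j : \sum_l M i l * M l j = c * M i j.
Proof. by have /matrixP/(_ i j) := M_sq; rewrite !mxE. Qed.

Lemma cols_proportional_at_min j j' :
  exists m, forall l, M l j * M m j' = M m j * M l j'.
Proof.
have [m m_min] := @exists_min_ratio _ j (M ^~ j) (M ^~ j') (M_gt0 ^~ j').
exists m => l.
have sum0 : \sum_l M m l * (M l j * M m j' - M m j * M l j') = 0.
  transitivity (M m j' * (\sum_l M m l * M l j)
                - M m j * (\sum_l M m l * M l j')).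
    by rewrite !mulr_sumr -sumrB; apply: eq_bigr => i _; ring.
  by rewrite !mulmx_sq_entry; ring.
have term_ge0 i : true -> 0 <= M m i * (M i j * M m j' - M m j * M i j').
  by move=> _; have := m_min i; have := M_gt0 m i; nia.
have /eqP := @psumr_eq0P _ _ _ _ term_ge0 sum0 l isT.
by rewrite mulf_eq0 gt_eqF //= subr_eq0 => /eqP.
Qed.

Lemma rank_one_entries a b j j' : M a j * M b j' = M b j * M a j'.
Proof.
have [m Mm] := cols_proportional_at_min j j'.
apply: (mulIf (lt0r_neq0 (M_gt0 m j'))).
transitivity (M a j * M m j' * M b j'); first ring.
transitivity (M b j * M m j' * M a j'); last ring.
by rewrite Mm Mm; ring.
Qed.

Lemma mxtrace_scaled_idempotent (i0 : 'I_n) : \tr M = c.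
Proof.
apply: (mulIf (lt0r_neq0 (M_gt0 i0 i0))).
rewrite mulr_suml -mulmx_sq_entry; apply: eq_bigr => l _.
by rewrite (rank_one_entries l i0 l i0) mulrC.
Qed.

End PositiveScaledIdempotent.

Section TraceBounds.

Variables (R : numDomainType) (n : nat) (A : 'M[R]_n).
Hypothesis diag_ge0 : forall i, 0 <= A i i.

Lemma diag_le_mxtrace i : A i i <= \tr A.
Proof. by rewrite /mxtrace (bigD1 i) //= lerDl sumr_ge0. Qed.

Lemma diag_add_le_mxtrace i j : i != j -> A i i + A j j <= \tr A.
Proof.
move=> neq_ij; rewrite /mxtrace (bigD1 i) //= (bigD1 j) 1?eq_sym //=.
by rewrite addrA lerDl sumr_ge0.
Qed.

End TraceBounds.

Lemma mxtrace_ge_size n (A : 'M[int]_n) : (forall i, 0 < A i i) -> n%:Z <= \tr A.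
Proof.
move=> diag_gt0; have : \sum_(i < n) (1 : int) <= \tr A.
  by apply: ler_sum => i _; rewrite -gtz0_ge1.
by rewrite sumr_const card_ord natz.
Qed.

Fixpoint tuples {T : Type} (r : seq T) (n : nat) : seq (seq T) :=
  if n is n'.+1 then [seq x :: t | x <- r, t <- tuples r n'] else [:: [::]].

Lemma mem_tuples (T : eqType) (r : seq T) n s :
  (s \in tuples r n) = (size s == n) && all (mem r) s.
Proof.
elim: n s => [|n IHn] [|x s] //=.
  by apply/negbTE/allpairsP => -[[y t] [_ _]].
rewrite eqSS; apply/allpairsP/andP => [[[y t] [/= y_r t_rn [-> ->]]]|].
  by move: t_rn; rewrite IHn => /andP[-> ->]; rewrite y_r.
move=> [sz /andP[x_r s_r]].
by exists (x, s); split=> //=; rewrite IHn sz.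
Qed.

Definition posz_range (m : nat) : seq int := [seq i%:Z | i <- iota 1 m].

Lemma mem_posz_range m x : (x \in posz_range m) = (0 < x <= m%:Z).
Proof.
apply/mapP/andP => [[i] | [x_gt0 x_le]].
  by rewrite mem_iota => /andP[i_gt0 i_lt] ->; lia.
case: x x_gt0 x_le => // i i_gt0 i_le; exists i => //.
by rewrite mem_iota; lia.
Qed.

Definition row_from_diag (d c : seq int) : seq int :=
  mkseq (fun j => (d`_j * c`_0 %/ c`_j)%Z) (size d).

Definition rank_one_completion (c r : seq int) : seq (seq int) :=
  mkseq (fun i => mkseq (fun j => (c`_i * r`_j %/ c`_0)%Z) (size r)) (size c).

Definition perm_conj_eq (L N : seq (seq int)) (p : seq nat) : bool :=
  all (fun i => all (fun j =>
    nth 0 (nth [::] L (nth 0%N p i)) (nth 0%N p j) == nth 0 (nth [::] N i) j)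
      (iota 0 (size N))) (iota 0 (size N)).

Definition perm_conj_in_N_list (L : seq (seq int)) : bool :=
  has (fun p => has (fun N => (size N == size L) && perm_conj_eq L N p) N_list)
    (permutations (iota 0 (size L))).

(* The candidate with diagonal [d] and first column [c] is the rank-one matrix
   with entries c_i r_j / c_0, whose first row is r_j = d_j c_0 / c_j; the two
   tests say that all these divisions are exact. *)
Definition completion_classified (d c : seq int) : bool :=
  let r := row_from_diag d c in
  let L := rank_one_completion c r in
  let k := size d in
  if all (fun j => c`_j * r`_j == d`_j * c`_0) (iota 0 k)
     && all (fun i => all (fun j =>
          c`_i * r`_j == nth 0 (nth [::] L i) j * c`_0) (iota 0 k)) (iota 0 k)
  then perm_conj_in_N_list L else true.

Definition classification_check (k : nat) : bool :=
  all (fun d => all (fun t => completion_classified d (d`_0 :: t))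
                    (tuples (posz_range 6) k.-1))
    [seq d <- tuples (posz_range 5) k | foldr +%R 0 d == 5].

Lemma classification_check_le5 : all classification_check (iota 1 5).
Proof. by vm_compute. Qed.

Definition mx_rows {n} (A : 'M[int]_n.+1) : seq (seq int) :=
  mkseq (fun i => mkseq (fun j => A (inord i) (inord j)) n.+1) n.+1.

Lemma mx_rowsE n (A : 'M[int]_n.+1) i j : (i < n.+1)%N -> (j < n.+1)%N ->
  nth 0 (nth [::] (mx_rows A) i) j = A (inord i) (inord j).
Proof. by move=> lt_i lt_j; rewrite !nth_mkseq. Qed.

Lemma perm_conj_in_N_listP n (A : 'M[int]_n.+1) :
  perm_conj_in_N_list (mx_rows A) ->
  exists s : 'S_n.+1, exists2 N, N \in N_list &
    mx_is (perm_mx s *m A *m invmx (perm_mx s)) N.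
Proof.
rewrite /perm_conj_in_N_list size_mkseq => /hasP[p].
rewrite mem_permutations => p_perm /hasP[N N_in /andP[/eqP sizeN conj_pN]].
have p_uniq : uniq p by rewrite (perm_uniq p_perm) iota_uniq.
have size_p : size p = n.+1 by rewrite (perm_size p_perm) size_iota.
have p_lt i : (i < n.+1)%N -> (nth 0%N p i < n.+1)%N.
  move=> lt_i; have : nth 0%N p i \in p by rewrite mem_nth ?size_p.
  by rewrite (perm_mem p_perm) mem_iota.
pose f (i : 'I_n.+1) : 'I_n.+1 := inord (nth 0%N p i).
have f_inj : injective f.
  move=> i j /(congr1 val); rewrite /f /= !inordK ?p_lt // => /eqP.
  by rewrite nth_uniq ?size_p // => /eqP/val_inj.
exists (perm f_inj), N => //; split=> // i j.
rewrite perm_mx_conjE !permE -mx_rowsE ?p_lt //.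
have mem_ord (l : 'I_n.+1) : nat_of_ord l \in iota 0 (size N).
  by rewrite sizeN mem_iota add0n ltn_ord.
by move/allP/(_ _ (mem_ord i))/allP/(_ _ (mem_ord j))/eqP: conj_pN.
Qed.

Lemma foldr_addr_mkseq (V : nmodType) (f : nat -> V) n :
  foldr +%R 0 (mkseq f n) = \sum_(i < n) f i.
Proof.
transitivity (\sum_(x <- mkseq f n) x).
  by elim: (mkseq f n) => [|x s IHs]; rewrite ?big_nil ?big_cons /= ?IHs.
by rewrite /mkseq big_map -{1}(subn0 n) big_mkord.
Qed.

Lemma mul_le6_of_add_le5 (x y : int) : 0 < x -> 0 < y -> x + y <= 5 -> x * y <= 6.
Proof. by move=> *; nia. Qed.

Section ClassificationCheckSound.

Variables (n : nat) (M : 'M[int]_n.+1).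
Hypotheses (M_gt0 : forall i j, 0 < M i j)
  (M_rank_one : forall a b i j, M a i * M b j = M b i * M a j)
  (trM : \tr M = 5).

Local Notation m i j := (M (inord i) (inord j)).

Lemma rank_one_corner (i j : nat) : m i j * m 0 0 = m i 0 * m 0 j.
Proof. by rewrite M_rank_one mulrC. Qed.

Let d := mkseq (fun j => m j j) n.+1.
Let t := [seq m i 0 | i <- iota 1 n].
Let c := mkseq (fun i => m i 0) n.+1.

Lemma diag_candidate :
  d \in [seq e <- tuples (posz_range 5) n.+1 | foldr +%R 0 e == 5].
Proof.
rewrite mem_filter mem_tuples size_mkseq eqxx foldr_addr_mkseq.
rewrite (eq_bigr (fun i => M i i)) => [|i _]; last by rewrite inord_val.
rewrite -[\sum_i M i i]/(\tr M) trM eqxx; apply/allP => _ /mapP[i _ ->].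
have diag_le5 : m i i <= 5 by rewrite -trM diag_le_mxtrace // => l; rewrite ltW.
by rewrite inE mem_posz_range M_gt0; exact: diag_le5.
Qed.

Lemma first_column_candidate : t \in tuples (posz_range 6) n.
Proof.
rewrite mem_tuples size_map size_iota eqxx; apply/allP => x /mapP[i].
rewrite mem_iota add1n => /andP[i_gt0 i_le] ->.
have neq_i0 : inord i != inord 0 :> 'I_n.+1.
  by apply/eqP => /(congr1 val); rewrite /= !inordK //; lia.
have diag_le5 : m i i + m 0 0 <= 5.
  by rewrite -trM diag_add_le_mxtrace // => l; rewrite ltW.
have := mul_le6_of_add_le5 _ _ (M_gt0 _ _) (M_gt0 _ _) diag_le5.
rewrite rank_one_corner inE mem_posz_range M_gt0 /=.
by have := M_gt0 (inord 0) (inord i); nia.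
Qed.

Lemma row_from_diag_mx : row_from_diag d c = mkseq (fun j => m 0 j) n.+1.
Proof.
apply: (@eq_from_nth _ 0); rewrite ?size_mkseq // => j lt_j.
rewrite !nth_mkseq ?size_mkseq // rank_one_corner.
by rewrite mulKz ?lt0r_neq0.
Qed.

Lemma rank_one_completion_mx :
  rank_one_completion c (mkseq (fun j => m 0 j) n.+1) = mx_rows M.
Proof.
apply: (@eq_from_nth _ [::]); rewrite ?size_mkseq // => i lt_i.
rewrite !nth_mkseq ?size_mkseq //.
apply: (@eq_from_nth _ 0); rewrite ?size_mkseq // => j lt_j.
rewrite !nth_mkseq ?size_mkseq // -rank_one_corner.
by rewrite mulzK ?lt0r_neq0.
Qed.

Lemma classification_check_mx_rows :
  classification_check n.+1 -> perm_conj_in_N_list (mx_rows M).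
Proof.
move/allP/(_ d diag_candidate)/allP/(_ t first_column_candidate).
have -> : d`_0 :: t = c by [].
rewrite /completion_classified row_from_diag_mx rank_one_completion_mx.
rewrite size_mkseq ifT //; apply/andP; split; apply/allP => i.
  by rewrite mem_iota add0n => lt_i; rewrite !nth_mkseq // rank_one_corner.
rewrite mem_iota add0n => lt_i; apply/allP => j; rewrite mem_iota add0n => lt_j.
by rewrite mx_rowsE // !nth_mkseq // rank_one_corner.
Qed.

End ClassificationCheckSound.

Theorem mainTheorem10 (k : nat) (M : 'M[int]_k) :
  (0 < k)%N ->
  (forall i j : 'I_k, 0 < M i j) ->
  M *m M = 5 *: M ->
  exists s : 'S_k,
    exists2 N, N \in N_list &
      mx_is (perm_mx s *m M *m invmx (perm_mx s)) N.
Proof.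
case: k M => // n M _ M_gt0 M_sq.
have trM : \tr M = 5 := @mxtrace_scaled_idempotent _ _ M M_gt0 M_sq ord0.
have n_lt5 : (n < 5)%N.
  by have := @mxtrace_ge_size _ M (fun i => M_gt0 i i); rewrite trM; lia.
apply: perm_conj_in_N_listP; apply: classification_check_mx_rows trM _ => //.
  exact: @rank_one_entries _ _ M M_gt0 M_sq.
by move/allP: classification_check_le5; apply; rewrite mem_iota; lia.
Qed.
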